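(* Let $\mathcal{A}$ be a Fréchet algebra and $\mathcal{U}$ a countably incomplete ultrafilter on an index set $I$. Then the ultrapower $(\mathcal{A})_{\mathcal{U}}$ is unital if and only if $\mathcal{A}$ is unital.
   Context: A Fréchet algebra $(\mathcal{A},(P_n))$ is a complete topological algebra whose topology is given by an increasing sequence of submultiplicative seminorms. For a countably incomplete ultrafilter $\mathcal{U}$ on $I$ (i.e. there are $U_1\supseteq U_2\supseteq\cdots$ in $\mathcal{U}$ with empty intersection), the ultrapower $(\mathcal{A})_{\mathcal{U}}$ is $\ell_\infty(I,\mathcal{A})/\mathcal{N}_{\mathcal{U}}$, where $\ell_\infty(I,\mathcal{A})=\{(x_i)\in\prod_I\mathcal{A}:\sup_iP_n(x_i)<\infty\ \forall n\}$ and $\mathcal{N}_{\mathcal{U}}=\{(x_i):\lim_{\mathcal{U}}P_n(x_i)=0\ \forall n\}$, with seminorms $Q'_n((x_i)_{\mathcal{U}})=\lim_{\mathcal{U}}P_n(x_i)$ and coordinatewise product; it is a Fréchet algebra. *)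

From Stdlib Require Import Reals.
Open Scope R_scope.

Record FrechetAlgebra := {
  fa_car :> Type;
  fa_zero : fa_car;
  fa_add : fa_car -> fa_car -> fa_car;
  fa_opp : fa_car -> fa_car;
  fa_scal : R -> fa_car -> fa_car;
  fa_mul : fa_car -> fa_car -> fa_car;
  fa_P : nat -> fa_car -> R;
  fa_addA : forall x y z, fa_add x (fa_add y z) = fa_add (fa_add x y) z;
  fa_addC : forall x y, fa_add x y = fa_add y x;
  fa_add0 : forall x, fa_add x fa_zero = x;
  fa_addN : forall x, fa_add x (fa_opp x) = fa_zero;
  fa_scal1 : forall x, fa_scal 1 x = x;
  fa_scalA : forall a b x, fa_scal a (fa_scal b x) = fa_scal (a * b) x;
  fa_scalDr : forall a x y, fa_scal a (fa_add x y) = fa_add (fa_scal a x) (fa_scal a y);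
  fa_scalDl : forall a b x, fa_scal (a + b) x = fa_add (fa_scal a x) (fa_scal b x);
  fa_mulA : forall x y z, fa_mul x (fa_mul y z) = fa_mul (fa_mul x y) z;
  fa_mulDl : forall x y z, fa_mul (fa_add x y) z = fa_add (fa_mul x z) (fa_mul y z);
  fa_mulDr : forall x y z, fa_mul x (fa_add y z) = fa_add (fa_mul x y) (fa_mul x z);
  fa_scal_mull : forall a x y, fa_mul (fa_scal a x) y = fa_scal a (fa_mul x y);
  fa_scal_mulr : forall a x y, fa_mul x (fa_scal a y) = fa_scal a (fa_mul x y);
  fa_P_nonneg : forall n x, 0 <= fa_P n x;
  fa_P_add : forall n x y, fa_P n (fa_add x y) <= fa_P n x + fa_P n y;
  fa_P_scal : forall n a x, fa_P n (fa_scal a x) = Rabs a * fa_P n x;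
  fa_P_mul : forall n x y, fa_P n (fa_mul x y) <= fa_P n x * fa_P n y;
  fa_P_incr : forall n x, fa_P n x <= fa_P (S n) x;
  fa_sep : forall x, (forall n, fa_P n x = 0) -> x = fa_zero;
  fa_complete : forall u : nat -> fa_car,
    (forall n eps, 0 < eps -> exists N, forall p q, (N <= p)%nat -> (N <= q)%nat ->
        fa_P n (fa_add (u p) (fa_opp (u q))) < eps) ->
    exists l, forall n eps, 0 < eps -> exists N, forall p, (N <= p)%nat ->
        fa_P n (fa_add (u p) (fa_opp l)) < eps
}.

Arguments fa_zero {_}. Arguments fa_add {_}. Arguments fa_opp {_}.
Arguments fa_scal {_}. Arguments fa_mul {_}. Arguments fa_P {_}.

Definition fa_sub {A : FrechetAlgebra} (x y : A) : A := fa_add x (fa_opp y).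

Definition unital (A : FrechetAlgebra) : Prop :=
  exists e : A, forall x : A, fa_mul e x = x /\ fa_mul x e = x.

Definition is_ultrafilter {I : Type} (U : (I -> Prop) -> Prop) : Prop :=
  U (fun _ => True) /\
  ~ U (fun _ => False) /\
  (forall S T : I -> Prop, U S -> (forall i, S i -> T i) -> U T) /\
  (forall S T : I -> Prop, U S -> U T -> U (fun i => S i /\ T i)) /\
  (forall S : I -> Prop, U S \/ U (fun i => ~ S i)).

Definition countably_incomplete {I : Type} (U : (I -> Prop) -> Prop) : Prop :=
  exists Un : nat -> I -> Prop,
    (forall n, U (Un n)) /\
    (forall n i, Un (S n) i -> Un n i) /\
    (forall i, ~ (forall n, Un n i)).

Definition ulim {I : Type} (U : (I -> Prop) -> Prop) (f : I -> R) (l : R) : Prop :=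
  forall eps, 0 < eps -> U (fun i => Rabs (f i - l) < eps).

Definition bounded_fam {A : FrechetAlgebra} {I : Type} (x : I -> A) : Prop :=
  forall n, exists M, forall i, fa_P n (x i) <= M.

Definition in_NU {A : FrechetAlgebra} {I : Type} (U : (I -> Prop) -> Prop)
  (x : I -> A) : Prop :=
  forall n, ulim U (fun i => fa_P n (x i)) 0.

(** Equality in the ultrapower (A)_U = ell_infty(I,A)/N_U of the classes of x, y. *)
Definition up_eq {A : FrechetAlgebra} {I : Type} (U : (I -> Prop) -> Prop)
  (x y : I -> A) : Prop :=
  in_NU U (fun i => fa_sub (x i) (y i)).

Definition up_mul {A : FrechetAlgebra} {I : Type} (x y : I -> A) : I -> A :=
  fun i => fa_mul (x i) (y i).

Definition ultrapower_unital (A : FrechetAlgebra) (I : Type)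
  (U : (I -> Prop) -> Prop) : Prop :=
  exists e : I -> A, bounded_fam e /\
    forall x : I -> A, bounded_fam x ->
      up_eq U (up_mul e x) x /\ up_eq U (up_mul x e) x.

(* Write e = (e_i)_U for an identity of the ultrapower. Testing e against the
   bounded family (e_j)_{j in I} itself, up to choosing a single "worst" j for
   each i, shows that e_i e_j is uniformly close to e_j for U-most i; with the
   symmetric fact for e_j e_i, the family (e_i) is U-Cauchy in every seminorm.
   A diagonal sequence e_{i_k} is then Cauchy in A, and its limit l is the
   U-limit of (e_i); l is an identity of A because l a is the U-limit of e_i a,
   which is U-close to a. Conversely a unit of A gives the constant family. *)

From Stdlib Require Import Reals Lra Lia Classical IndefiniteDescription.
Open Scope R_scope.

Section FrechetAlgebraFacts.

Context {A : FrechetAlgebra}.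
Implicit Types x y z : A.

Lemma fa_add_cancel_r x y z : fa_add x z = fa_add y z -> x = y.
Proof.
  intro H. rewrite <- (fa_add0 A x), <- (fa_add0 A y), <- (fa_addN A z).
  rewrite !fa_addA, H. reflexivity.
Qed.

Lemma fa_add0l x : fa_add fa_zero x = x.
Proof. rewrite fa_addC; apply fa_add0. Qed.

Lemma fa_scal0 x : fa_scal 0 x = fa_zero.
Proof.
  apply (fa_add_cancel_r _ _ (fa_scal 0 x)).
  rewrite <- fa_scalDl, Rplus_0_l, fa_add0l. reflexivity.
Qed.

Lemma fa_P0 n : fa_P n (@fa_zero A) = 0.
Proof. rewrite <- (fa_scal0 fa_zero), fa_P_scal, Rabs_R0. ring. Qed.

Lemma fa_mul0l y : fa_mul fa_zero y = fa_zero.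
Proof.
  apply (fa_add_cancel_r _ _ (fa_mul fa_zero y)).
  rewrite <- fa_mulDl, !fa_add0l. reflexivity.
Qed.

Lemma fa_opp_unique x y : fa_add x y = fa_zero -> y = fa_opp x.
Proof.
  intro H. apply (fa_add_cancel_r _ _ x).
  rewrite (fa_addC _ (fa_opp x)), fa_addN, fa_addC. exact H.
Qed.

Lemma fa_mulNl x y : fa_mul (fa_opp x) y = fa_opp (fa_mul x y).
Proof. apply fa_opp_unique. rewrite <- fa_mulDl, fa_addN. apply fa_mul0l. Qed.

Lemma fa_PN n x : fa_P n (fa_opp x) = fa_P n x.
Proof.
  assert (Hopp : fa_opp x = fa_scal (-1) x).
  { symmetry. apply fa_opp_unique. rewrite <- (fa_scal1 A x) at 1.
    rewrite <- fa_scalDl, Rplus_opp_r. apply fa_scal0. }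
  rewrite Hopp, fa_P_scal, Rabs_left by lra. ring.
Qed.

Lemma fa_sub_add x y z : fa_sub x z = fa_add (fa_sub x y) (fa_sub y z).
Proof.
  unfold fa_sub. rewrite <- fa_addA, (fa_addA _ (fa_opp y)), (fa_addC _ (fa_opp y) y).
  rewrite fa_addN, fa_add0l. reflexivity.
Qed.

Lemma fa_P_sub_triangle n x y z :
  fa_P n (fa_sub x z) <= fa_P n (fa_sub x y) + fa_P n (fa_sub y z).
Proof. rewrite (fa_sub_add x y z). apply fa_P_add. Qed.

Lemma fa_P_subC n x y : fa_P n (fa_sub x y) = fa_P n (fa_sub y x).
Proof.
  assert (Hswap : fa_sub y x = fa_opp (fa_sub x y)).
  { apply fa_opp_unique. rewrite <- fa_sub_add. apply fa_addN. }
  rewrite Hswap, fa_PN. reflexivity.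
Qed.

Lemma fa_sub_eq0 x y : fa_sub x y = fa_zero -> x = y.
Proof.
  unfold fa_sub. intro H. apply (fa_add_cancel_r _ _ (fa_opp y)).
  rewrite H, fa_addN. reflexivity.
Qed.

Lemma fa_P_le n m x : (n <= m)%nat -> fa_P n x <= fa_P m x.
Proof.
  induction 1 as [|m _ IH]; [lra|].
  eapply Rle_trans; [exact IH | apply fa_P_incr].
Qed.

Lemma fa_mul_subl x y z : fa_mul (fa_sub x y) z = fa_sub (fa_mul x z) (fa_mul y z).
Proof. unfold fa_sub. rewrite fa_mulDl, fa_mulNl. reflexivity. Qed.

End FrechetAlgebraFacts.

Definition opposite_algebra (A : FrechetAlgebra) : FrechetAlgebra.
Proof.
  refine (@Build_FrechetAlgebra A fa_zero fa_add fa_opp fa_scal (fun x y => fa_mul y x) fa_P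
    (fa_addA A) (fa_addC A) (fa_add0 A) (fa_addN A) (fa_scal1 A) (fa_scalA A) (fa_scalDr A)
    (fa_scalDl A) _ (fun x y z => fa_mulDr A z x y) (fun x y z => fa_mulDl A y z x)
    (fun a x y => fa_scal_mulr A a y x) (fun a x y => fa_scal_mull A a y x)
    (fa_P_nonneg A) (fa_P_add A) (fa_P_scal A) _ (fa_P_incr A) (fa_sep A) (fa_complete A)).
  - intros x y z. symmetry. apply fa_mulA.
  - intros n x y. rewrite Rmult_comm. apply fa_P_mul.
Defined.

Section Ultrafilter.

Context {I : Type} (U : (I -> Prop) -> Prop) (HU : is_ultrafilter U).

Lemma uf_and S T : U S -> U T -> U (fun i => S i /\ T i).
Proof. destruct HU as (_ & _ & _ & Hand & _). apply Hand. Qed.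

Lemma uf_mono S T : U S -> (forall i, S i -> T i) -> U T.
Proof. destruct HU as (_ & _ & Hmono & _). apply Hmono. Qed.

Lemma uf_all (S : I -> Prop) : (forall i, S i) -> U S.
Proof. intro Hall. apply (uf_mono (fun _ => True)); [apply HU | auto]. Qed.

Lemma uf_nonempty S : U S -> exists i, S i.
Proof.
  intro HS. apply NNPP. intro Hempty. destruct HU as (_ & Hfalse & _).
  apply Hfalse, (uf_mono S); [exact HS|]. intros i Hi. apply Hempty. eauto.
Qed.

Lemma uf_and_prefix (V : nat -> I -> Prop) :
  (forall k, U (V k)) -> forall k, U (fun i => forall m, (m <= k)%nat -> V m i).
Proof.
  intros HV k. induction k as [|k IH].
  - apply (uf_mono (V 0%nat)); [apply HV|].
    intros i Hi m Hm. replace m with 0%nat by lia. exact Hi.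
  - apply (uf_mono _ _ (uf_and _ _ IH (HV (Datatypes.S k)))).
    intros i [Hle HSk] m Hm.
    destruct (Nat.eq_dec m (Datatypes.S k)) as [->|Hne]; [exact HSk | apply Hle; lia].
Qed.

End Ultrafilter.

Definition U_cauchy {A : FrechetAlgebra} {I : Type} (U : (I -> Prop) -> Prop)
  (e : I -> A) : Prop :=
  forall n eps, 0 < eps -> exists S, U S /\
    forall i j, S i -> S j -> fa_P n (fa_sub (e i) (e j)) < eps.

Definition U_limit {A : FrechetAlgebra} {I : Type} (U : (I -> Prop) -> Prop)
  (e : I -> A) (l : A) : Prop :=
  forall n eps, 0 < eps -> exists S, U S /\
    forall i, S i -> fa_P n (fa_sub (e i) l) < eps.

Definition ultrapower_left_unit {A : FrechetAlgebra} {I : Type}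
  (U : (I -> Prop) -> Prop) (e : I -> A) : Prop :=
  forall x : I -> A, bounded_fam x -> up_eq U (up_mul e x) x.

Lemma INR_inv_lt_eventually (eps : R) (n : nat) :
  0 < eps -> exists N, (n <= N)%nat /\ / INR (S N) < eps.
Proof.
  intro Heps. destruct (archimed_cor1 eps Heps) as [k [Hk Hk0]].
  exists (Nat.max n k). split; [lia|].
  eapply Rle_lt_trans; [|exact Hk].
  apply Rinv_le_contravar; [apply lt_0_INR; exact Hk0 | apply le_INR; lia].
Qed.

Lemma ultrapower_left_unit_uniform {A : FrechetAlgebra} {I : Type}
  (U : (I -> Prop) -> Prop) (e : I -> A) :
  bounded_fam e -> ultrapower_left_unit U e ->
  forall n eps, 0 < eps -> exists S, U S /\
    forall i, S i -> forall j, fa_P n (fa_sub (fa_mul (e i) (e j)) (e j)) < eps.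
Proof.
  intros He HL n eps Heps.
  set (bad := fun i j => eps <= fa_P n (fa_sub (fa_mul (e i) (e j)) (e j))).
  assert (Hwit : forall i, exists j, (exists j', bad i j') -> bad i j).
  { intro i. destruct (classic (exists j', bad i j')) as [[j' Hj']|Hnone].
    - exists j'. auto.
    - exists i. contradiction. }
  destruct (functional_choice _ Hwit) as [worst Hworst].
  assert (Hbounded : bounded_fam (fun i => e (worst i))).
  { intro m. destruct (He m) as [M HM]. exists M. intro i. apply HM. }
  exists (fun i => Rabs (fa_P n (fa_sub (fa_mul (e i) (e (worst i))) (e (worst i))) - 0) < eps).
  split; [exact (HL _ Hbounded n eps Heps)|].
  intros i Hi j. apply Rnot_le_lt. intro Hbad.
  specialize (Hworst i (ex_intro _ j Hbad)). unfold bad in Hworst.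
  rewrite Rminus_0_r, Rabs_pos_eq in Hi by apply fa_P_nonneg. lra.
Qed.

Section UltrapowerUnit.

Context {A : FrechetAlgebra} {I : Type} (U : (I -> Prop) -> Prop).
Hypothesis HU : is_ultrafilter U.

Lemma ultrapower_unit_U_cauchy (e : I -> A) :
  bounded_fam e -> ultrapower_left_unit U e ->
  @ultrapower_left_unit (opposite_algebra A) I U e -> U_cauchy U e.
Proof.
  intros He HL HR n eps Heps.
  destruct (ultrapower_left_unit_uniform U e He HL n (eps / 2)) as [SL [HSL Hleft]]; [lra|].
  destruct (@ultrapower_left_unit_uniform (opposite_algebra A) I U e He HR n (eps / 2))
    as [SR [HSR Hright]]; [lra|].
  exists (fun i => SL i /\ SR i). split; [exact (uf_and U HU _ _ HSL HSR)|].
  intros i j [HLi _] [_ HRj].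
  pose proof (fa_P_sub_triangle n (e i) (fa_mul (e i) (e j)) (e j)) as Htri.
  rewrite (fa_P_subC n (e i) (fa_mul (e i) (e j))) in Htri.
  pose proof (Hleft i HLi j). pose proof (Hright j HRj i). simpl in *. unfold fa_sub in *. lra.
Qed.

Lemma U_cauchy_limit (e : I -> A) : U_cauchy U e -> exists l, U_limit U e l.
Proof.
  intro Hc.
  assert (Hk : forall k, exists W, U W /\
    forall i j, W i -> W j -> fa_P k (fa_sub (e i) (e j)) < / INR (S k)).
  { intro k. apply Hc, Rinv_0_lt_compat, lt_0_INR. lia. }
  destruct (functional_choice _ Hk) as [V HV].
  set (T := fun k i => forall m, (m <= k)%nat -> V m i).
  assert (HT : forall k, U (T k)) by (apply uf_and_prefix; [exact HU | apply HV]).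
  destruct (functional_choice _ (fun k => uf_nonempty U HU _ (HT k))) as [idx Hidx].
  (* i_k lies in V_0, ..., V_k, which makes (e_{i_k}) Cauchy in every seminorm. *)
  assert (Hclose : forall n N i p, (n <= N)%nat -> (N <= p)%nat -> V N i ->
            fa_P n (fa_sub (e i) (e (idx p))) < / INR (S N)).
  { intros n N i p HnN HNp Hi. eapply Rle_lt_trans; [exact (fa_P_le n N _ HnN)|].
    apply HV; [exact Hi | apply Hidx; exact HNp]. }
  destruct (fa_complete A (fun k => e (idx k))) as [l Hl].
  { intros n eps Heps. destruct (INR_inv_lt_eventually eps n Heps) as [N [HnN HN]].
    exists N. intros p q Hp Hq.
    pose proof (Hclose n N (idx p) q HnN Hq (Hidx p N Hp)). unfold fa_sub in *. lra. }
  exists l. intros n eps Heps.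
  destruct (INR_inv_lt_eventually (eps / 2) n) as [N1 [HnN1 HN1]]; [lra|].
  destruct (Hl n (eps / 2)) as [N2 HN2]; [lra|].
  exists (V N1). split; [apply HV|]. intros i Hi.
  set (p := Nat.max N1 N2).
  pose proof (fa_P_sub_triangle n (e i) (e (idx p)) l).
  pose proof (HN2 p ltac:(lia)).
  pose proof (Hclose n N1 i p HnN1 ltac:(lia) Hi).
  unfold fa_sub in *. lra.
Qed.

Lemma ultrapower_left_unit_limit (e : I -> A) (l : A) :
  ultrapower_left_unit U e -> U_limit U e l -> forall a : A, fa_mul l a = a.
Proof.
  intros HL Hl a. apply fa_sub_eq0, fa_sep. intro n.
  apply Rle_antisym; [|apply fa_P_nonneg].
  apply Rle_plus_epsilon. intros eps Heps. rewrite Rplus_0_l.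
  set (c := fa_P n a + 1).
  assert (Ha : 0 <= fa_P n a) by apply fa_P_nonneg.
  destruct (Hl n (eps / 2 / c)) as [S [HS Hnear]].
  { unfold c. apply Rdiv_lt_0_compat; lra. }
  assert (Hconst : bounded_fam (fun _ : I => a)).
  { intro m. exists (fa_P m a). intros. lra. }
  pose proof (HL _ Hconst n (eps / 2) ltac:(lra)) as Hunit.
  destruct (uf_nonempty U HU _ (uf_and U HU _ _ HS Hunit)) as [i [Hi Hi']].
  cbv beta in Hi'. unfold up_mul in Hi'.
  rewrite Rminus_0_r, Rabs_pos_eq in Hi' by apply fa_P_nonneg.
  pose proof (fa_P_sub_triangle n (fa_mul l a) (fa_mul (e i) a) a) as Htri.
  rewrite <- fa_mul_subl in Htri.
  pose proof (fa_P_mul A n (fa_sub l (e i)) a) as Hmul.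
  pose proof (Hnear i Hi) as Hd. rewrite fa_P_subC in Hd.
  assert (fa_P n (fa_sub l (e i)) * fa_P n a <= eps / 2 / c * fa_P n a).
  { apply Rmult_le_compat_r; lra. }
  assert (eps / 2 / c * fa_P n a <= eps / 2).
  { unfold c. apply (Rmult_le_reg_r (fa_P n a + 1)); [lra|].
    field_simplify; [|lra]. nra. }
  lra.
Qed.

Lemma unital_ultrapower_unital : unital A -> ultrapower_unital A I U.
Proof.
  intros [e He]. exists (fun _ => e). split.
  - intro n. exists (fa_P n e). intros. lra.
  - intros x _. split; intros n eps Heps; apply (uf_all U HU); intro i;
      unfold up_mul; destruct (He (x i)) as [Hl Hr]; [rewrite Hl | rewrite Hr];
      unfold fa_sub; rewrite fa_addN, fa_P0, Rminus_0_r, Rabs_R0; exact Heps.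
Qed.

End UltrapowerUnit.

Theorem proposition3p1 (A : FrechetAlgebra) (I : Type)
  (U : (I -> Prop) -> Prop)
  (HU : is_ultrafilter U) (Hci : countably_incomplete U) :
  ultrapower_unital A I U <-> unital A.
Proof.
  split.
  - intros [e [He Hunit]].
    assert (HL : ultrapower_left_unit U e) by (intros x Hx; apply Hunit, Hx).
    assert (HR : @ultrapower_left_unit (opposite_algebra A) I U e)
      by (intros x Hx; apply Hunit, Hx).
    destruct (U_cauchy_limit U HU e (ultrapower_unit_U_cauchy U HU e He HL HR)) as [l Hl].
    exists l. intro x. split.
    + exact (ultrapower_left_unit_limit U HU e l HL Hl x).
    + exact (@ultrapower_left_unit_limit (opposite_algebra A) I U HU e l HR Hl x).
  - exact (unital_ultrapower_unital U HU).
Qed.
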